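(* Let $T$ be a finite tree, $\mathbb{K}$ a field, and $\boldsymbol{\alpha}=(\alpha_u)_{u\in T}$ a family of invertible elements of $\mathbb{K}$ indexed by the vertices of $T$. Let $s$ and $t$ be adjacent vertices of $T$. Define $\boldsymbol{\beta}=(\beta_u)_{u\in T}$ by $\beta_s=1$; $\beta_u=\alpha_u/\alpha_s$ if $u\neq s$ and $u$ is adjacent to $t$; and $\beta_u=\alpha_u$ otherwise. Then $X_T(\boldsymbol{\alpha})$ is isomorphic to $X_T(\boldsymbol{\beta})$.
   Context: For a finite tree $T$ (connected, simply connected finite graph) write $s-t$ when vertices $s,t$ are adjacent. For a family $\boldsymbol{\alpha}=(\alpha_t)_{t\in T}$ of elements of a field $\mathbb{K}$, $X_T(\boldsymbol{\alpha})$ denotes the affine scheme over $\mathbb{K}$ with coordinates $x_t,x'_t$ ($t\in T$) defined by the equations $x_t x'_t = 1+\alpha_t\prod_{s-t} x_s$ for all vertices $t$ of $T$. *)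

From HB Require Import structures.
From mathcomp Require Import all_boot all_order all_algebra.
From mathcomp Require Import mpoly.
Set Implicit Arguments. Unset Strict Implicit. Unset Printing Implicit Defensive.
Import Order.TTheory GRing.Theory.
Local Open Scope ring_scope.

Definition simple_graph (V : finType) (e : rel V) : Prop :=
  (forall x y : V, e x y = e y x) /\ (forall x : V, e x x = false).

(* A finite tree: a nonempty connected simple graph with #|V| - 1 (unordered) edges.
   Ordered adjacent pairs are counted, hence the factor 2. *)
Definition is_tree (V : finType) (e : rel V) : Prop :=
  [/\ simple_graph e, 0 < #|V|,
      (forall x y : V, connect e x y)
    & #|[set p : V * V | e p.1 p.2]| = (#|V| - 1).*2]%N.

Definition nv (V : finType) : nat := (#|V| + #|V|)%N.

Definition xv (K : fieldType) (V : finType) (t : V) : {mpoly K[nv V]} :=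
  'X_(lshift #|V| (enum_rank t)).
Definition xv' (K : fieldType) (V : finType) (t : V) : {mpoly K[nv V]} :=
  'X_(rshift #|V| (enum_rank t)).

Definition XT_eq (K : fieldType) (V : finType) (e : rel V) (alpha : V -> K) (t : V)
  : {mpoly K[nv V]} :=
  xv K t * xv' K t - (1 + alpha t *: \prod_(s | e s t) xv K s).

Definition in_XT_ideal (K : fieldType) (V : finType) (e : rel V) (alpha : V -> K)
  (p : {mpoly K[nv V]}) : Prop :=
  exists c : V -> {mpoly K[nv V]}, p = \sum_(t : V) c t * XT_eq e alpha t.

(* X_T(alpha) and X_T(beta) are isomorphic affine K-schemes, i.e. their coordinate
   K-algebras K[x,x']/I(alpha) and K[x,x']/I(beta) are isomorphic.  A K-algebra map
   K[x]/I(beta) -> K[x]/I(alpha) is given by images f of the variables (a tuple of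
   polynomials) such that I(beta) is mapped into I(alpha); g likewise in the other
   direction; the two composites are the identity modulo the ideals. *)
Definition XT_isomorphic (K : fieldType) (V : finType) (e : rel V)
  (alpha beta : V -> K) : Prop :=
  exists (f g : (nv V).-tuple {mpoly K[nv V]}),
    [/\ forall t : V, in_XT_ideal e alpha (comp_mpoly f (XT_eq e beta t)),
        forall t : V, in_XT_ideal e beta (comp_mpoly g (XT_eq e alpha t)),
        forall i : 'I_(nv V),
          in_XT_ideal e alpha (comp_mpoly f (tnth g i) - 'X_i)
      & forall i : 'I_(nv V),
          in_XT_ideal e beta (comp_mpoly g (tnth f i) - 'X_i)].

Definition beta_of (K : fieldType) (V : finType) (e : rel V) (alpha : V -> K)
  (s t : V) (u : V) : K :=
  if u == s then 1 else if e u t then alpha u / alpha s else alpha u.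

From HB Require Import structures.
From mathcomp Require Import all_boot all_order all_algebra.
From mathcomp Require Import mpoly.
Set Implicit Arguments. Unset Strict Implicit.
Import GRing.Theory.
Local Open Scope ring_scope.

(* The isomorphism is a torus rescaling: x_t |-> c x_t, x'_t |-> c^-1 x'_t
   fixes x_t x'_t and multiplies the monomial prod_{v - u} x_v by c exactly when
   u is a neighbour of t, so it turns the equations of X_T(b) into those of
   X_T(a) whenever a_u = c b_u for the neighbours u of t and a_u = b_u
   otherwise.  For c = alpha_s this relates alpha and beta; c^-1 gives the
   inverse map. *)

Lemma prod_if_eq (R : comNzRingType) (I : finType) (P : pred I) (i0 : I) (c : R) :
  \prod_(i | P i) (if i == i0 then c else 1) = if P i0 then c else 1.
Proof.
case: ifP => Pi0; last by rewrite big1 // => i Pi; case: eqP Pi => // ->; rewrite Pi0.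
by rewrite (bigD1 i0) //= eqxx big1 ?mulr1 // => i /andP[_ /negbTE ->].
Qed.

Section Rescaling.
Variables (K : fieldType) (V : finType) (t : V).

Definition rescale_vars (c : K) : (nv V).-tuple {mpoly K[nv V]} :=
  [tuple if i == lshift #|V| (enum_rank t) then c *: 'X_i
         else if i == rshift #|V| (enum_rank t) then c^-1 *: 'X_i else 'X_i
   | i < nv V].

Lemma comp_rescaleX c i : comp_mpoly (rescale_vars c) 'X_i = tnth (rescale_vars c) i.
Proof. by rewrite comp_mpolyXU -tnth_nth. Qed.

Lemma comp_rescale_xv c u :
  comp_mpoly (rescale_vars c) (xv K u) = (if u == t then c else 1) *: xv K u.
Proof.
rewrite /xv comp_rescaleX tnth_mktuple eq_lshift eq_lrshift (inj_eq enum_rank_inj).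
by case: (u == t); rewrite ?scale1r.
Qed.

Lemma comp_rescale_xv' c u :
  comp_mpoly (rescale_vars c) (xv' K u) = (if u == t then c^-1 else 1) *: xv' K u.
Proof.
rewrite /xv' comp_rescaleX tnth_mktuple eq_rlshift eq_rshift (inj_eq enum_rank_inj).
by case: (u == t); rewrite ?scale1r.
Qed.

Lemma comp_rescale_XT_eq (e : rel V) (a b : V -> K) c u : c != 0 ->
  b u * (if e t u then c else 1) = a u ->
  comp_mpoly (rescale_vars c) (XT_eq e b u) = XT_eq e a u.
Proof.
move=> c0 bca.
rewrite /XT_eq comp_mpolyB comp_mpolyD comp_mpoly1 comp_mpolyZ rmorphM /=.
rewrite comp_rescale_xv comp_rescale_xv' rmorph_prod /=.
under eq_bigr do rewrite comp_rescale_xv.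
rewrite scaler_prod prod_if_eq scalerA -bca -scalerAr -scalerAl scalerA.
by case: (u == t); rewrite ?mulVf ?mulr1 ?scale1r.
Qed.

Lemma comp_rescale_inv c i : c != 0 ->
  comp_mpoly (rescale_vars c) (tnth (rescale_vars c^-1) i) = 'X_i.
Proof.
move=> c0; rewrite tnth_mktuple.
case: eqP => [->|ne1].
  by rewrite comp_mpolyZ comp_rescaleX tnth_mktuple eqxx scalerA mulVf // scale1r.
case: eqP => [->|ne2].
  by rewrite comp_mpolyZ comp_rescaleX tnth_mktuple eq_rlshift eqxx scalerA invrK
    mulfV // scale1r.
by rewrite comp_rescaleX tnth_mktuple (introF eqP ne1) (introF eqP ne2).
Qed.

End Rescaling.

Lemma in_XT_ideal0 (K : fieldType) (V : finType) (e : rel V) (a : V -> K) :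
  in_XT_ideal e a 0.
Proof. by exists (fun=> 0); rewrite big1 // => u _; rewrite mul0r. Qed.

Lemma in_XT_ideal_eq (K : fieldType) (V : finType) (e : rel V) (a : V -> K) u :
  in_XT_ideal e a (XT_eq e a u).
Proof.
exists (fun v => if v == u then 1 else 0).
by rewrite (bigD1 u) //= eqxx mul1r big1 ?addr0 // => v /negbTE ->; rewrite mul0r.
Qed.

Lemma XT_isomorphic_rescale (K : fieldType) (V : finType) (e : rel V)
  (a b : V -> K) (t : V) (c : K) : c != 0 ->
  (forall u, b u * (if e t u then c else 1) = a u) ->
  XT_isomorphic e a b.
Proof.
move=> c0 bca.
have c'0 : c^-1 != 0 by rewrite invr_eq0.
have acb u : a u * (if e t u then c^-1 else 1) = b u.
  by rewrite -bca; case: ifP; rewrite ?mulr1 ?mulfK.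
exists (rescale_vars t c), (rescale_vars t c^-1); split => [u|u|i|i].
- by rewrite (comp_rescale_XT_eq c0 (bca u)); apply: in_XT_ideal_eq.
- by rewrite (comp_rescale_XT_eq c'0 (acb u)); apply: in_XT_ideal_eq.
- by rewrite (comp_rescale_inv t i c0) subrr; apply: in_XT_ideal0.
- have := comp_rescale_inv t i c'0; rewrite invrK => ->.
  by rewrite subrr; apply: in_XT_ideal0.
Qed.

Theorem mainTheorem1 (K : fieldType) (V : finType) (e : rel V)
  (alpha : V -> K) (s t : V) :
  is_tree e ->
  (forall u : V, alpha u != 0) ->
  e s t ->
  XT_isomorphic e alpha (beta_of e alpha s t).
Proof.
move=> [[sym _] _ _ _] alpha0 est.
apply: (XT_isomorphic_rescale (t := t) (alpha0 s)) => u.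
rewrite /beta_of (sym u); case: eqP => [->|_]; first by rewrite -sym est mul1r.
by case: ifP => _; rewrite ?mulr1 ?mulfVK.
Qed.
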